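(* Consider problem (P) under Assumptions (A1)–(A3), suppose $\inf_{x\in\mathcal{X}}f(x)>-\infty$, and suppose the SMIL algorithm generates an infinite sequence of (accepted) iterates. Then: (i) $\{f(x^k)\}$ and $\{m_k\}$ converge to the same finite value $f_\star\ge\inf_{\mathcal{X}}f$, the latter from above; (ii) $\sum_{k\in\mathbb{N}}\Psi_k<\infty$; (iii) $\lim_{k\to\infty}\Psi_k=0$.
   Context: Problem (P): minimize $f(x)$ subject to $x\in\mathcal{X}:=\bar{\mathcal{X}}\cap\{x\in\mathbb{R}^n : x_i\in\mathbb{Z}\ \forall i\in\mathcal{I}\}$, with $\bar{\mathcal{X}}\subseteq\mathbb{R}^n$ a closed convex polyhedral set, $\mathcal{I}\subseteq\{1,\dots,n\}$, $\mathcal{X}\ne\emptyset$, $f:\mathbb{R}^n\to\mathbb{R}$. Write $x=(u,z)$ with $u$ the components with indices not in $\mathcal{I}$ and $z$ those in $\mathcal{I}$. Assumptions: (A1) $f$ is $C^1$ with locally Lipschitz gradient; (A2) $f(u,z)=f_1(u)+\langle f_2,z\rangle$; (A3) the feasible integer parts $\{z:(u,z)\in\mathcal{X}\}$ form a bounded set. $\|x\|_{PL}$ is the $\ell_1$- or $\ell_\infty$-norm of the components with indices not in $\mathcal{I}$; $\mathbb{B}_{PL}(x,\Delta):=\{w:\|w-x\|_{PL}\le\Delta\}$. SMIL algorithm. Input $x^0\in\mathcal{X}$, $\varepsilon\ge0$; parameters $\Delta_0>0$, $\varrho,\kappa\in(0,1)$, $\kappa_m\in(0,1]$. Set $m_0:=f(x^0)$.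 For $k=0,1,2,\dots$: (S1) compute $x^{k+1}\in\arg\min\{\langle\nabla f(x^k),x\rangle : x\in\mathcal{X}\cap\mathbb{B}_{PL}(x^k,\Delta_k)\}$; (S2) set $a_k:=m_k-f(x^{k+1})$ and $\Psi_k:=\langle\nabla f(x^k),x^k-x^{k+1}\rangle$; (S3) if $\Psi_k\le\varepsilon$, return $x^k$; (S4) if $a_k<\varrho\Psi_k$, set $\Delta_k\leftarrow\kappa\Delta_k$ and go back to (S1); (S5) set $m_{k+1}:=(1-\kappa_m)m_k+\kappa_m f(x^{k+1})$; (S6) choose $\Delta_{k+1}$ either by the rule $\Delta_{k+1}=\kappa\Delta_k$ if $\rho_k<\varrho_1$, $=\Delta_k$ if $\varrho_1\le\rho_k<\varrho_2$, $=\Delta_k/\kappa$ if $\rho_k\ge\varrho_2$, where $\rho_k:=a_k/\Psi_k$ and $\varrho\le\varrho_1<\varrho_2<1$; or by a reset $\Delta_{k+1}\in[\Delta_{\min},\Delta_{\max}]$, $0<\Delta_{\min}\le\Delta_{\max}$. Here $\Psi_k$, $m_k$, $x^{k+1}$ refer to the accepted values at iteration $k$. *)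

From HB Require Import structures.
From mathcomp Require Import all_boot all_order all_algebra.
From mathcomp Require Import all_classical all_reals all_analysis.
Set Implicit Arguments. Unset Strict Implicit. Unset Printing Implicit Defensive.
Import Order.TTheory GRing.Theory Num.Theory.
Local Open Scope ring_scope.
Local Open Scope classical_set_scope.

Section SMILDefs.
Variables (R : realType) (n : nat).

Definition dotp (a b : 'I_n -> R) : R := \sum_(i < n) a i * b i.
Definition vsub (a b : 'I_n -> R) : 'I_n -> R := fun i => a i - b i.

(* Sup norm on R^n (used only for differentiability / Lipschitz notions,
   all norms being equivalent on R^n). *)
Definition nrmInf (v : 'I_n -> R) : R := \big[Num.max/0]_(i < n) `|v i|.

Definition polyhedral (S : set ('I_n -> R)) : Prop :=
  exists (p : nat) (A : 'I_p -> 'I_n -> R) (b : 'I_p -> R),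
    S = [set x | forall j : 'I_p, \sum_(i < n) A j i * x i <= b j].

Definition MIset (Xbar : set ('I_n -> R)) (I : {set 'I_n}) : set ('I_n -> R) :=
  [set x | Xbar x /\ forall i, i \in I -> exists z : int, x i = z%:~R].

Definition normPL (l1 : bool) (I : {set 'I_n}) (v : 'I_n -> R) : R :=
  if l1 then \sum_(i < n | i \notin I) `|v i|
  else \big[Num.max/0]_(i < n | i \notin I) `|v i|.

Definition ballPL (l1 : bool) (I : {set 'I_n}) (x : 'I_n -> R) (D : R)
  : set ('I_n -> R) := [set w | normPL l1 I (vsub w x) <= D].

Definition has_gradient (f : ('I_n -> R) -> R) (g : ('I_n -> R) -> 'I_n -> R)
  : Prop :=
  forall x (e : R), 0 < e -> exists d : R, 0 < d /\
    forall y, nrmInf (vsub y x) < d ->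
      `|f y - f x - dotp (g x) (vsub y x)| <= e * nrmInf (vsub y x).

Definition locally_lipschitz (g : ('I_n -> R) -> 'I_n -> R) : Prop :=
  forall x, exists r L : R, 0 < r /\
    forall y z, nrmInf (vsub y x) <= r -> nrmInf (vsub z x) <= r ->
      nrmInf (vsub (g y) (g z)) <= L * nrmInf (vsub y z).

Definition is_argmin (S : set ('I_n -> R)) (phi : ('I_n -> R) -> R)
  (y : 'I_n -> R) : Prop := S y /\ forall w, S w -> phi y <= phi w.

(* One SMIL run generating an infinite sequence of accepted iterates.
   x k = x^k, D k = accepted radius Delta_k at iteration k,
   Dt k = trial radius with which iteration k starts (Dt 0 = Delta_0),
   m k = m_k. *)
Definition SMIL_run (f : ('I_n -> R) -> R) (g : ('I_n -> R) -> 'I_n -> R)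
  (X : set ('I_n -> R)) (l1 : bool) (I : {set 'I_n})
  (eps Delta0 varrho kappa kappa_m varrho1 varrho2 Dmin Dmax : R)
  (x : nat -> 'I_n -> R) (D Dt m : nat -> R) : Prop :=
  let Psi k y := dotp (g (x k)) (vsub (x k) y) in
  [/\ X (x 0), m 0 = f (x 0), Dt 0 = Delta0 &
   forall k,
   [/\
    (* (S1)-(S4) with backtracking: the accepted radius is kappa^j * Dt k,
       all previous trial radii were rejected at (S4) *)
    exists j : nat, D k = kappa ^+ j * Dt k /\
      (forall j', (j' < j)%N -> exists y,
         is_argmin (X `&` ballPL l1 I (x k) (kappa ^+ j' * Dt k))
                   (dotp (g (x k))) y /\
         eps < Psi k y /\ m k - f y < varrho * Psi k y),
    is_argmin (X `&` ballPL l1 I (x k) (D k)) (dotp (g (x k))) (x k.+1),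
    (* (S3) not triggered, (S4) accepted *)
    eps < Psi k (x k.+1) /\ varrho * Psi k (x k.+1) <= m k - f (x k.+1),
    m k.+1 = (1 - kappa_m) * m k + kappa_m * f (x k.+1) &
    (let rho := (m k - f (x k.+1)) / Psi k (x k.+1) in
     Dt k.+1 = (if rho < varrho1 then kappa * D k
                else if rho < varrho2 then D k else D k / kappa))
    \/ (Dmin <= Dt k.+1 <= Dmax)]].

Definition Psi_seq (g : ('I_n -> R) -> 'I_n -> R) (x : nat -> 'I_n -> R)
  (k : nat) : R := dotp (g (x k)) (vsub (x k) (x k.+1)).

End SMILDefs.

From HB Require Import structures.
From mathcomp Require Import all_boot all_order all_algebra.
From mathcomp Require Import all_classical all_reals all_analysis.
From mathcomp Require Import lra ring.
Set Implicit Arguments. Unset Strict Implicit. Unset Printing Implicit Defensive.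
Import Order.TTheory GRing.Theory Num.Theory.
Import numFieldNormedType.Exports.
Local Open Scope ring_scope.
Local Open Scope classical_set_scope.

(* The reference value m_k is a convex combination of m_{k-1} and the new
   objective value, and the acceptance test (S4) forces f(x^{k+1}) below m_k
   by at least varrho Psi_k.  Hence f(x^k) <= m_k and
   m_{k+1} <= m_k - kappa_m varrho Psi_k: the reference values decrease and,
   being bounded below by inf f, converge; telescoping bounds the partial sums
   of Psi, and f(x^{k+1}) is recovered from m_k and m_{k+1}. *)

Section MeritSequence.
Variables (R : realType) (a m P : nat -> R) (kappa_m varrho lb : R).
Hypotheses (kappa_m_gt0 : 0 < kappa_m) (kappa_m_le1 : kappa_m <= 1).
Hypothesis varrho_gt0 : 0 < varrho.
Hypothesis P_ge0 : forall k, 0 <= P k.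
Hypothesis merit0 : m 0%N = a 0%N.
Hypothesis merit_update :
  forall k, m k.+1 = (1 - kappa_m) * m k + kappa_m * a k.+1.
Hypothesis sufficient_decrease : forall k, varrho * P k <= m k - a k.+1.
Hypothesis lb_le : forall k, lb <= a k.

Lemma le_merit k : a k <= m k.
Proof.
case: k => [|k]; first by rewrite merit0.
have gap_ge0 : 0 <= m k - a k.+1.
  by apply: le_trans (sufficient_decrease k); rewrite mulr_ge0 // ltW.
have : kappa_m * (m k - a k.+1) <= m k - a k.+1 by rewrite ler_piMl.
rewrite merit_update; lra.
Qed.

Lemma merit_decrease k : m k.+1 <= m k - kappa_m * varrho * P k.
Proof.
have : kappa_m * (varrho * P k) <= kappa_m * (m k - a k.+1).
  by rewrite ler_pM2l // sufficient_decrease.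
rewrite merit_update mulrA; lra.
Qed.

Lemma merit_nonincreasing : {homo m : i j / (i <= j)%N >-> j <= i}.
Proof.
apply/nonincreasing_seqP => k; apply: le_trans (merit_decrease k) _.
by rewrite lerBlDr lerDl !mulr_ge0 // ltW.
Qed.

Let merit_lbound : has_lbound (range m).
Proof. by exists lb => _ [k _ <-]; exact: le_trans (lb_le k) (le_merit k). Qed.

Lemma inf_merit_le k : inf (range m) <= m k.
Proof. by apply: ge_inf; [exact: merit_lbound | exists k]. Qed.

Lemma cvg_merit : m @ \oo --> inf (range m).
Proof. exact: nonincreasing_cvgn merit_nonincreasing merit_lbound. Qed.

Lemma series_decrease_le k :
  kappa_m * varrho * series P k <= m 0%N - m k.
Proof.
elim: k => [|k IH]; first by rewrite /series /= big_geq // mulr0 subrr.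
rewrite seriesSr mulrDr; have := merit_decrease k; lra.
Qed.

Lemma is_cvg_series_decrease : cvg (series P @ \oo).
Proof.
have kv_gt0 : 0 < kappa_m * varrho by rewrite mulr_gt0.
apply: cvgP; apply: nondecreasing_cvgn.
  by apply/nondecreasing_seqP => k; rewrite seriesSr lerDl.
exists ((m 0%N - inf (range m)) / (kappa_m * varrho)) => _ [k _ <-].
rewrite ler_pdivlMr // mulrC; apply: le_trans (series_decrease_le k) _.
by rewrite lerD2l lerN2 inf_merit_le.
Qed.

Lemma cvg_values : a @ \oo --> inf (range m).
Proof.
rewrite -cvg_shiftS /=.
have -> : (fun k => a k.+1) =
    (fun k => m k.+1 * kappa_m^-1 + (1 - kappa_m^-1) * m k).
  by apply/funext => k; rewrite merit_update; field; rewrite gt_eqF.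
have m_shift_cvg : (fun k => m k.+1) @ \oo --> inf (range m).
  by rewrite (cvg_shiftS m); exact: cvg_merit.
have limE : inf (range m) * kappa_m^-1 + (1 - kappa_m^-1) * inf (range m)
    = inf (range m) by ring.
have := cvgD (cvgM m_shift_cvg (cvg_cst kappa_m^-1))
  (cvgM (cvg_cst (1 - kappa_m^-1)) cvg_merit).
by rewrite limE; apply.
Qed.

End MeritSequence.

Lemma SMIL_run_step (R : realType) (n : nat) (f : ('I_n -> R) -> R)
    (g : ('I_n -> R) -> 'I_n -> R) (X : set ('I_n -> R)) (l1 : bool)
    (I : {set 'I_n})
    (eps Delta0 varrho kappa kappa_m varrho1 varrho2 Dmin Dmax : R)
    (x : nat -> 'I_n -> R) (D Dt m : nat -> R) :
  0 <= eps ->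
  SMIL_run f g X l1 I eps Delta0 varrho kappa kappa_m varrho1 varrho2
    Dmin Dmax x D Dt m ->
  forall k, [/\ X (x k.+1), 0 < Psi_seq g x k,
    varrho * Psi_seq g x k <= m k - f (x k.+1) &
    m k.+1 = (1 - kappa_m) * m k + kappa_m * f (x k.+1)].
Proof.
move=> eps_ge0 [_ _ _ run] k.
have [_ [[Xx _] _] [eps_lt accepted] update _] := run k.
by split => //; exact: le_lt_trans eps_ge0 eps_lt.
Qed.

Theorem mainTheorem6 (R : realType) (n : nat)
  (Xbar : set ('I_n -> R)) (I : {set 'I_n})
  (f : ('I_n -> R) -> R) (g : ('I_n -> R) -> 'I_n -> R) (l1 : bool)
  (eps Delta0 varrho kappa kappa_m varrho1 varrho2 Dmin Dmax : R)
  (x : nat -> 'I_n -> R) (D Dt m : nat -> R) :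
  polyhedral Xbar ->
  MIset Xbar I !=set0 ->
  (* (A1) *)
  has_gradient f g -> locally_lipschitz g ->
  (* (A2) *)
  (exists (f1 : ('I_n -> R) -> R) (f2 : 'I_n -> R), forall y,
     f y = f1 (fun i => if i \in I then 0 else y i)
           + \sum_(i < n | i \in I) f2 i * y i) ->
  (* (A3) *)
  (exists M : R, forall y, MIset Xbar I y -> forall i, i \in I -> `|y i| <= M) ->
  (* inf_X f > -oo *)
  (exists lb : R, forall y, MIset Xbar I y -> lb <= f y) ->
  (* parameters *)
  0 <= eps -> 0 < Delta0 -> 0 < varrho < 1 -> 0 < kappa < 1 ->
  0 < kappa_m <= 1 -> varrho <= varrho1 -> varrho1 < varrho2 -> varrho2 < 1 ->
  0 < Dmin -> Dmin <= Dmax ->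
  SMIL_run f g (MIset Xbar I) l1 I eps Delta0 varrho kappa kappa_m
    varrho1 varrho2 Dmin Dmax x D Dt m ->
  exists fstar : R,
    [/\ (* (i) *)
        [/\ inf [set f y | y in MIset Xbar I] <= fstar,
             (fun k => f (x k)) @ \oo --> fstar,
             m @ \oo --> fstar &
             (forall k, fstar <= m k)],
        (* (ii) *) cvg (series (Psi_seq g x) @ \oo) &
        (* (iii) *) Psi_seq g x @ \oo --> 0].
Proof.
move=> _ _ _ _ _ _ [lb f_ge_lb] eps_ge0 _ /andP[varrho_gt0 _] _
  /andP[kappa_m_gt0 kappa_m_le1] _ _ _ _ _ run.
have step := SMIL_run_step eps_ge0 run.
have [X0 merit0 _ _] := run.
have Xx k : MIset Xbar I (x k) by case: k => // k; have [] := step k.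
have P_ge0 k : 0 <= Psi_seq g x k by have [_ /ltW] := step k.
have decrease k := let: And4 _ _ h _ := step k in h.
have update k := let: And4 _ _ _ h := step k in h.
have lb_le k : lb <= f (x k) := f_ge_lb _ (Xx k).
have series_cvg := is_cvg_series_decrease kappa_m_gt0 kappa_m_le1 varrho_gt0
  P_ge0 merit0 update decrease lb_le.
exists (inf (range m)); split => //.
- split.
  + apply: lb_le_inf; first by exists (m 0%N), 0%N.
    move=> _ [k _ <-].
    apply: le_trans (le_merit (a := fun k => f (x k)) kappa_m_le1 varrho_gt0
      P_ge0 merit0 update decrease k).
    apply: ge_inf; last by exists (x k).
    by exists lb => _ [y Xy <-]; exact: f_ge_lb.
  + exact: cvg_values kappa_m_gt0 kappa_m_le1 varrho_gt0 P_ge0 merit0 update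
      decrease lb_le.
  + exact: cvg_merit kappa_m_gt0 kappa_m_le1 varrho_gt0 P_ge0 merit0 update
      decrease lb_le.
  + exact: inf_merit_le kappa_m_le1 varrho_gt0 P_ge0 merit0 update decrease
      lb_le.
- exact: cvg_series_cvg_0 series_cvg.
Qed.
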